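(* Over a field of characteristic $0$, write $[a,b]=ab-ba$ and $\{a,b\}=ab+ba$. An algebra is left-symmetric and satisfies $a(bc)+b(ac)+a(cb)+c(ab)+b(ca)+c(ba)=0$ if and only if, in terms of $[\cdot,\cdot]$ and $\{\cdot,\cdot\}$, it satisfies \[ [[a,b],c]+[[b,c],a]+[[c,a],b]=0, \] \[ \{\{a,b\},c\}=-\{[a,b],c\}-2\{[a,c],b\}+[\{a,b\},c]-[[a,c],b]+\{a,\{b,c\}\}-\{a,[b,c]\}+[a,\{b,c\}], \] and \[ \{a,\{b,c\}\}=\{[a,b],c\}+\{[a,c],b\}+[\{b,c\},a]+\tfrac23[[a,c],b]+\tfrac13[a,[b,c]]. \]
   Context: A left-symmetric algebra is an algebra whose associator $(a,b,c)=(ab)c-a(bc)$ satisfies $(a,b,c)=(b,a,c)$. The statement is the polarization (Markl–Remm) of this variety. *)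

From HB Require Import structures.
From mathcomp Require Import all_boot all_order all_algebra.
Set Implicit Arguments. Unset Strict Implicit. Unset Printing Implicit Defensive.
Import GRing.Theory.
Local Open Scope ring_scope.

Definition bilinear_mul (K : fieldType) (V : lmodType K) (mul : V -> V -> V) :=
  (forall (k : K) (x y z : V), mul (k *: x + y) z = k *: mul x z + mul y z) /\
  (forall (k : K) (x y z : V), mul x (k *: y + z) = k *: mul x y + mul x z).

Definition lbr (K : fieldType) (V : lmodType K) (mul : V -> V -> V) (a b : V) :=
  mul a b - mul b a.
Definition acbr (K : fieldType) (V : lmodType K) (mul : V -> V -> V) (a b : V) :=
  mul a b + mul b a.

Definition assoc (K : fieldType) (V : lmodType K) (mul : V -> V -> V) (a b c : V) :=
  mul (mul a b) c - mul a (mul b c).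

Definition left_symmetric (K : fieldType) (V : lmodType K) (mul : V -> V -> V) :=
  forall a b c : V, assoc mul a b c = assoc mul b a c.

From HB Require Import structures.
From mathcomp Require Import all_boot all_order all_algebra.
From mathcomp Require Import ring.
Set Implicit Arguments.
Unset Strict Implicit.
Unset Printing Implicit Defensive.
Import GRing.Theory.
Local Open Scope ring_scope.

(* Expanded by bilinearity, every identity involved is a linear relation among
   the twelve products x(yz) and (xy)z with {x, y, z} = {a, b, c}.  Each
   implication is therefore witnessed by an explicit linear combination of
   instances of the hypotheses; the combination is checked coefficientwise by
   reflection, and characteristic 0 is only used to divide by 2 and 3. *)

Section LinearExpressions.
Variables (R : pzRingType) (V : lmodType R).

Inductive linexpr :=
  | LAtom of nat | LAdd of linexpr & linexpr | LOpp of linexpr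
  | LScale of R & linexpr | LZero.

Fixpoint linexpr_eval (atoms : seq V) (e : linexpr) : V :=
  match e with
  | LAtom n => atoms`_n
  | LAdd e1 e2 => linexpr_eval atoms e1 + linexpr_eval atoms e2
  | LOpp e1 => - linexpr_eval atoms e1
  | LScale k e1 => k *: linexpr_eval atoms e1
  | LZero => 0
  end.

Fixpoint linexpr_coef (e : linexpr) (i : nat) : R :=
  match e with
  | LAtom n => if n == i then 1 else 0
  | LAdd e1 e2 => linexpr_coef e1 i + linexpr_coef e2 i
  | LOpp e1 => - linexpr_coef e1 i
  | LScale k e1 => k * linexpr_coef e1 i
  | LZero => 0
  end.

Lemma linexpr_evalE atoms e :
  linexpr_eval atoms e = \sum_(i < size atoms) linexpr_coef e i *: atoms`_i.
Proof.
elim: e => [n|e1 IH1 e2 IH2|e1 IH1|k e1 IH1|] /=.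
- have [n_lt|n_ge] := ltnP n (size atoms); last first.
    rewrite nth_default // big1 // => i _.
    by rewrite ifF ?scale0r //; apply: contraTF n_ge => /eqP->; rewrite -ltnNge.
  rewrite (bigD1 (Ordinal n_lt)) //= eqxx scale1r big1 ?addr0 // => i i_ne_n.
  by rewrite ifF ?scale0r //; apply: contraNF i_ne_n => /eqP n_i; apply/eqP/val_inj.
- by rewrite IH1 IH2 -big_split; apply: eq_bigr => i _; rewrite scalerDl.
- by rewrite IH1 -sumrN; apply: eq_bigr => i _; rewrite scaleNr.
- by rewrite IH1 scaler_sumr; apply: eq_bigr => i _; rewrite scalerA.
- by rewrite big1 // => i _; rewrite scale0r.
Qed.

Lemma linexpr_eval_eq0 atoms e :
  foldr and True [seq linexpr_coef e i = 0 | i <- iota 0 (size atoms)] ->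
  linexpr_eval atoms e = 0.
Proof.
move=> coef0; rewrite linexpr_evalE big1 // => i _.
suff -> : linexpr_coef e i = 0 by rewrite scale0r.
have : nat_of_ord i \in iota 0 (size atoms) by rewrite mem_iota add0n ltn_ord.
elim: (iota 0 (size atoms)) coef0 => //= j s IHs [coef_j coef_s].
by rewrite in_cons => /predU1P [->|/(IHs coef_s)].
Qed.

Lemma eq0_modulo (x P Q : V) (c : R) : P = Q -> x - c *: (P - Q) = 0 -> x = 0.
Proof. by move=> ->; rewrite subrr scaler0 subr0. Qed.

End LinearExpressions.

Arguments eq0_modulo {R V x P Q} c.

Ltac atom_index t atoms :=
  lazymatch atoms with
  | t :: _ => constr:(0%N)
  | _ :: ?atoms' => let n := atom_index t atoms' in constr:(n.+1)
  end.

Ltac reify_linexpr atoms t :=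
  lazymatch t with
  | (?x + ?y)%R =>
      let ex := reify_linexpr atoms x in let ey := reify_linexpr atoms y in
      constr:(LAdd ex ey)
  | (- ?x)%R => let ex := reify_linexpr atoms x in constr:(LOpp ex)
  | (?k *: ?x)%R => let ex := reify_linexpr atoms x in constr:(LScale k ex)
  | 0%R => open_constr:(@LZero _)
  | _ => let n := atom_index t atoms in open_constr:(@LAtom _ n)
  end.

Ltac linear_coefs_eq0 atoms :=
  lazymatch goal with
  | |- ?x = 0 =>
      let e := reify_linexpr atoms x in
      change (linexpr_eval atoms e = 0); apply: linexpr_eval_eq0;
      cbn [linexpr_coef map iota foldr size]
  end.

Section BilinearProduct.
Variables (K : fieldType) (V : lmodType K) (mul : V -> V -> V).
Hypothesis mul_bilinear : bilinear_mul mul.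

Lemma bilinear_mulDl x y z : mul (x + y) z = mul x z + mul y z.
Proof. by have := mul_bilinear.1 1 x y z; rewrite !scale1r. Qed.

Lemma bilinear_mulDr x y z : mul x (y + z) = mul x y + mul x z.
Proof. by have := mul_bilinear.2 1 x y z; rewrite !scale1r. Qed.

Lemma bilinear_mulNl x z : mul (- x) z = - mul x z.
Proof.
have mul0l : mul 0 z = 0.
  by apply: (addrI (mul 0 z)); rewrite addr0 -bilinear_mulDl addr0.
by apply: (addrI (mul x z)); rewrite -bilinear_mulDl !subrr mul0l.
Qed.

Lemma bilinear_mulNr x z : mul x (- z) = - mul x z.
Proof.
have mul0r : mul x 0 = 0.
  by apply: (addrI (mul x 0)); rewrite addr0 -bilinear_mulDr addr0.
by apply: (addrI (mul x z)); rewrite -bilinear_mulDr !subrr mul0r.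
Qed.

End BilinearProduct.

Section Polarization.
Variables (K : fieldType) (V : lmodType K) (mul : V -> V -> V).
Hypothesis mul_bilinear : bilinear_mul mul.
Hypothesis charK0 : [pchar K] =i pred0.

Definition lbr_jacobi (a b c : V) : Prop :=
  lbr mul (lbr mul a b) c + lbr mul (lbr mul b c) a + lbr mul (lbr mul c a) b = 0.

Definition acbr_left_rule (a b c : V) : Prop :=
  acbr mul (acbr mul a b) c =
    - acbr mul (lbr mul a b) c - 2%:R *: acbr mul (lbr mul a c) b
    + lbr mul (acbr mul a b) c - lbr mul (lbr mul a c) b
    + acbr mul a (acbr mul b c) - acbr mul a (lbr mul b c)
    + lbr mul a (acbr mul b c).

Definition acbr_right_rule (a b c : V) : Prop :=
  acbr mul a (acbr mul b c) =
    acbr mul (lbr mul a b) c + acbr mul (lbr mul a c) b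
    + lbr mul (acbr mul b c) a
    + (2%:R / 3%:R) *: lbr mul (lbr mul a c) b
    + (1 / 3%:R) *: lbr mul a (lbr mul b c).

Definition right_nested_symsum (a b c : V) : V :=
  mul a (mul b c) + mul b (mul a c) + mul a (mul c b)
  + mul c (mul a b) + mul b (mul c a) + mul c (mul b a).

Definition triple_products (a b c : V) : seq V :=
  [:: mul a (mul b c); mul a (mul c b); mul b (mul a c); mul b (mul c a);
      mul c (mul a b); mul c (mul b a);
      mul (mul a b) c; mul (mul a c) b; mul (mul b a) c; mul (mul b c) a;
      mul (mul c a) b; mul (mul c b) a].

Let natrK_neq0 n : n != 0%N -> n%:R != 0 :> K.
Proof. by rewrite (pcharf0P _).1. Qed.

Ltac expand_and_compare a b c :=
  rewrite /right_nested_symsum /assoc /lbr /acbr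
    !(bilinear_mulDl mul_bilinear, bilinear_mulDr mul_bilinear,
      bilinear_mulNl mul_bilinear, bilinear_mulNr mul_bilinear);
  let atoms := eval cbv delta [triple_products] beta in (triple_products a b c) in
  linear_coefs_eq0 atoms; repeat split; field; rewrite ?natrK_neq0.

Lemma left_symmetric_lbr_jacobi a b c : left_symmetric mul -> lbr_jacobi a b c.
Proof.
move=> lsym.
apply: (eq0_modulo 1 (lsym a b c)); apply: (eq0_modulo (-1) (lsym a c b)).
apply: (eq0_modulo 1 (lsym b c a)).
by expand_and_compare a b c.
Qed.

Lemma left_symmetric_acbr_left_rule a b c :
  left_symmetric mul -> acbr_left_rule a b c.
Proof.
move=> lsym; apply: subr0_eq.
apply: (eq0_modulo 1 (lsym a b c)); apply: (eq0_modulo 3%:R (lsym a c b)).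
apply: (eq0_modulo 1 (lsym b c a)).
by expand_and_compare a b c.
Qed.

Lemma left_symmetric_acbr_right_rule a b c :
  left_symmetric mul -> right_nested_symsum a b c = 0 -> acbr_right_rule a b c.
Proof.
move=> lsym symsum0; apply: subr0_eq.
apply: (eq0_modulo (-1) (lsym a b c)).
apply: (eq0_modulo (- (5%:R / 3%:R)) (lsym a c b)).
apply: (eq0_modulo (1 / 3%:R) (lsym b c a)).
apply: (eq0_modulo (2%:R / 3%:R) symsum0).
by expand_and_compare a b c.
Qed.

Lemma assoc_swap_of_polarized a b c :
  lbr_jacobi a b c -> acbr_left_rule a c b -> assoc mul a b c = assoc mul b a c.
Proof.
move=> jacobi left_rule; apply: subr0_eq.
apply: (eq0_modulo (1 / 4%:R) jacobi); apply: (eq0_modulo (1 / 4%:R) left_rule).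
by expand_and_compare a b c.
Qed.

Lemma right_nested_symsum_of_polarized a b c :
  lbr_jacobi a b c -> acbr_left_rule a b c -> acbr_left_rule a c b ->
  acbr_right_rule a b c -> right_nested_symsum a b c = 0.
Proof.
move=> jacobi left_rule_abc left_rule_acb right_rule.
apply: (eq0_modulo (- (1 / 2%:R)) jacobi).
apply: (eq0_modulo (1 / 2%:R) left_rule_abc).
apply: (eq0_modulo (1 / 2%:R) left_rule_acb).
apply: (eq0_modulo (3%:R / 2%:R) right_rule).
by expand_and_compare a b c.
Qed.

End Polarization.
Theorem mainTheorem15 (K : fieldType) (V : lmodType K) (mul : V -> V -> V) :
  [pchar K] =i pred0 ->
  bilinear_mul mul ->
  (left_symmetric mul /\
   (forall a b c : V,
      mul a (mul b c) + mul b (mul a c) + mul a (mul c b)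
      + mul c (mul a b) + mul b (mul c a) + mul c (mul b a) = 0))
  <->
  (forall a b c : V,
     [/\ lbr mul (lbr mul a b) c + lbr mul (lbr mul b c) a
           + lbr mul (lbr mul c a) b = 0,
         acbr mul (acbr mul a b) c =
           - acbr mul (lbr mul a b) c - 2%:R *: acbr mul (lbr mul a c) b
           + lbr mul (acbr mul a b) c - lbr mul (lbr mul a c) b
           + acbr mul a (acbr mul b c) - acbr mul a (lbr mul b c)
           + lbr mul a (acbr mul b c)
       & acbr mul a (acbr mul b c) =
           acbr mul (lbr mul a b) c + acbr mul (lbr mul a c) b
           + lbr mul (acbr mul b c) a
           + (2%:R / 3%:R) *: lbr mul (lbr mul a c) b
           + (1 / 3%:R) *: lbr mul a (lbr mul b c)]).
Proof.
move=> charK0 mul_bilinear; split.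
- move=> [lsym symsum0] a b c; split.
  + exact: left_symmetric_lbr_jacobi lsym.
  + exact: left_symmetric_acbr_left_rule lsym.
  + exact: left_symmetric_acbr_right_rule lsym (symsum0 a b c).
- move=> polarized; split=> a b c.
  + have [jacobi _ _] := polarized a b c.
    have [_ left_rule_acb _] := polarized a c b.
    exact: assoc_swap_of_polarized jacobi left_rule_acb.
  + have [jacobi left_rule_abc right_rule] := polarized a b c.
    have [_ left_rule_acb _] := polarized a c b.
    exact: right_nested_symsum_of_polarized jacobi left_rule_abc left_rule_acb
      right_rule.
Qed.
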